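(* Let $f$ be an entire transcendental function of perfectly regular growth having order $\rho$ and type $\tau$. Then the quasi-optimal radius satisfies \[ r_\diamond(n)\sim\Big(\frac{n}{\tau\rho}\Big)^{1/\rho}\qquad(n\to\infty). \]
   Context: $M(r)=\max_\theta|f(re^{i\theta})|$. The order is $\rho=\limsup_{r\to\infty}\log\log M(r)/\log r$. An entire transcendental function of order $0<\rho<\infty$ is of perfectly regular growth if the limit $\tau=\lim_{r\to\infty}\log M(r)/r^\rho$ exists and is positive and finite; $\tau$ is its type. The quasi-optimal radius $r_\diamond(n)$ is the unique minimizer over $r>0$ of $r^{-n}M(r)$ (defined for $n$ larger than the index of the first nonzero Taylor coefficient). *)

From Stdlib Require Import Reals.
From Coquelicot Require Export Coquelicot.
Open Scope R_scope.

Definition entire_with_coeffs (a : nat -> C) (f : C -> C) : Prop :=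
  forall z : C, is_series (fun n => (a n * pow_n z n)%C) (f z).

(* transcendental: infinitely many nonzero Taylor coefficients (not a polynomial) *)
Definition transcendental_coeffs (a : nat -> C) : Prop :=
  forall N : nat, exists n : nat, (N <= n)%nat /\ a n <> 0%C.

(* maximum modulus M(r) = max_theta |f(r e^{i theta})| (a supremum, finite for
   continuous f, hence [real] of the Rbar least upper bound). *)
Definition max_modulus (f : C -> C) (r : R) : R :=
  real (Lub_Rbar (fun y : R => exists t : R,
          y = Cmod (f ((r * cos t)%R, (r * sin t)%R)))).

Definition limsup_at_pinfty (g : R -> R) (l : R) : Prop :=
  forall eps : R, 0 < eps ->
    (exists R0 : R, forall r : R, R0 < r -> g r < l + eps) /\
    (forall R0 : R, exists r : R, R0 < r /\ l - eps < g r).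

Definition has_order (f : C -> C) (rho : R) : Prop :=
  limsup_at_pinfty (fun r => ln (ln (max_modulus f r)) / ln r) rho.

Definition perfectly_regular_growth (f : C -> C) (rho tau : R) : Prop :=
  0 < rho /\ has_order f rho /\ 0 < tau /\
  is_lim (fun r => ln (max_modulus f r) / Rpower r rho) p_infty tau.

Definition is_quasi_optimal_radius (f : C -> C) (n : nat) (r : R) : Prop :=
  0 < r /\
  forall s : R, 0 < s -> s <> r ->
    max_modulus f r / r ^ n < max_modulus f s / s ^ n.

From Stdlib Require Import Reals Lra Lia Classical.
From Coquelicot Require Import Coquelicot.
Open Scope R_scope.

(* Averaging f over N-th roots of unity gives the Cauchy estimate |a_k| r^k <= M(r); for k the
   index of the first nonzero coefficient this makes M positive and forces the quasi-optimal
   radius x_n to tend to infinity. Minimality of r^-n M(r), tested at x_n e^h, gives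
   n h < ln M(x_n e^h) - ln M(x_n) for every h <> 0. Writing ln M(r) = u(r) r^rho with
   u(r) -> tau, this reads q_n y < e^y - 1 + o(1) for q_n = n / (tau rho x_n^rho) and every
   real y, which squeezes q_n to 1 as y -> 0 from both sides; finally
   x_n / (n / (tau rho))^(1/rho) = q_n^(-1/rho). *)

Lemma pow_n_Cpow (z : C) (n : nat) : pow_n z n = (z ^ n)%C.
Proof. induction n as [|n IH]; [reflexivity|]. simpl. now rewrite IH. Qed.

Lemma Cmod_sum_n_le (t : nat -> C) (b : nat -> R) :
  (forall j, Cmod (t j) <= b j) -> forall n, Cmod (sum_n t n) <= sum_n b n.
Proof.
  intros Hb n; induction n as [|n IH].
  - rewrite !sum_O. apply Hb.
  - rewrite !sum_Sn. eapply Rle_trans; [apply (norm_triangle (sum_n t n) (t (S n)))|].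
    apply Rplus_le_compat; [apply IH | apply Hb].
Qed.

Lemma Cmod_series_le (t : nat -> C) (s : C) (b : nat -> R) (B : R) :
  is_series t s -> (forall j, Cmod (t j) <= b j) -> is_series b B -> Cmod s <= B.
Proof.
  intros Ht Hb HB.
  assert (Hnorm : is_lim_seq (fun n => Cmod (sum_n t n)) (Cmod s)).
  { eapply filterlim_comp; [apply Ht | apply (filterlim_norm (V := C_NormedModule))]. }
  exact (is_lim_seq_le _ _ _ _ (Cmod_sum_n_le t b Hb) Hnorm (HB : is_lim_seq (sum_n b) B)).
Qed.

Lemma is_series_bounded_terms (t : nat -> C) (s : C) :
  is_series t s -> exists K, forall n, Cmod (t n) <= K.
Proof.
  intros Ht.
  destruct (filterlim_bounded (V := C_NormedModule) (sum_n t)) as [K HK];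
    [now exists s|].
  exists (Rmax (Cmod (t O)) (2 * K)). intros [|n]; [apply Rmax_l|].
  eapply Rle_trans; [|apply Rmax_r].
  assert (Hdiff : t (S n) = (sum_n t (S n) - sum_n t n)%C).
  { rewrite sum_Sn. change (plus (sum_n t n) (t (S n))) with (sum_n t n + t (S n))%C.
    ring. }
  rewrite Hdiff. eapply Rle_trans; [apply (norm_triangle (V := C_NormedModule))|].
  rewrite (norm_opp (V := C_NormedModule)).
  pose proof (HK (S n)); pose proof (HK n).
  change (norm (sum_n t (S n)) + norm (sum_n t n) <= 2 * K). lra.
Qed.

(* Comparison at radius [2 r + 1] with a geometric series of ratio [r / (2 r + 1) < 1]. *)
Lemma ex_series_Cmod_coeffs (a : nat -> C) (f : C -> C) (r : R) :
  entire_with_coeffs a f -> 0 <= r -> ex_series (fun j => Cmod (a j) * r ^ j).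
Proof.
  intros Hf Hr.
  set (R0 := 2 * r + 1).
  assert (HR0 : 0 < R0) by (unfold R0; lra).
  assert (Hq : 0 <= r / R0 < 1).
  { split; [apply Rdiv_le_0_compat; lra|].
    apply Rmult_lt_reg_r with R0; [lra|]. field_simplify; unfold R0; lra. }
  destruct (is_series_bounded_terms _ _ (Hf (RtoC R0))) as [K HK].
  apply (ex_series_le (V := R_CompleteNormedModule)) with (b := fun j => K * (r / R0) ^ j).
  - intros j. change (norm (Cmod (a j) * r ^ j)) with (Rabs (Cmod (a j) * r ^ j)).
    specialize (HK j).
    rewrite Cmod_mult, pow_n_Cpow, Cmod_pow, Cmod_R, Rabs_pos_eq in HK by lra.
    assert (0 <= Cmod (a j)) by apply Cmod_ge_0.
    assert (0 < R0 ^ j) by (apply pow_lt; lra).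
    rewrite Rabs_pos_eq by (apply Rmult_le_pos; [lra|apply pow_le; lra]).
    unfold Rdiv. rewrite Rpow_mult_distr, pow_inv.
    replace (Cmod (a j) * r ^ j) with (Cmod (a j) * R0 ^ j * (r ^ j * / R0 ^ j))
      by (field; lra).
    apply Rmult_le_compat_r; [|exact HK].
    apply Rmult_le_pos; [apply pow_le; lra|left; apply Rinv_0_lt_compat; lra].
  - exists (K * / (1 - r / R0)).
    apply (is_series_scal_l (V := R_NormedModule) K (fun j => (r / R0) ^ j)).
    apply is_series_geom. rewrite Rabs_pos_eq; lra.
Qed.

Definition cis (t : R) : C := (cos t, sin t).

Lemma Cmod_cis (t : R) : Cmod (cis t) = 1.
Proof.
  unfold Cmod, cis; cbn [fst snd].
  rewrite <- !Rsqr_pow2, Rplus_comm, sin2_cos2. apply sqrt_1.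
Qed.

Lemma Cpow_cis (t : R) (m : nat) : (cis t ^ m)%C = cis (INR m * t).
Proof.
  induction m as [|m IH]; simpl Cpow.
  - unfold cis. now rewrite Rmult_0_l, cos_0, sin_0.
  - rewrite IH. unfold cis, Cmult; cbn [fst snd]. rewrite S_INR.
    replace ((INR m + 1) * t) with (t + INR m * t) by ring.
    rewrite cos_plus, sin_plus. f_equal; ring.
Qed.

Lemma Cpow_comm_exp (z : C) (m n : nat) : ((z ^ m) ^ n)%C = ((z ^ n) ^ m)%C.
Proof. now rewrite <- !Cpow_mult_r, Nat.mul_comm. Qed.

Fixpoint csum (g : nat -> C) (N : nat) : C :=
  match N with O => 0%C | S N => (csum g N + g N)%C end.

Lemma csum_ext (g h : nat -> C) (N : nat) :
  (forall m, g m = h m) -> csum g N = csum h N.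
Proof. intros H; induction N as [|N IH]; simpl; [reflexivity|]. now rewrite IH, H. Qed.

Lemma csum_scal (c : C) (g : nat -> C) (N : nat) :
  csum (fun m => c * g m)%C N = (c * csum g N)%C.
Proof. induction N as [|N IH]; simpl; [ring|]. rewrite IH. ring. Qed.

Lemma Cmod_csum_le (g : nat -> C) (N : nat) (B : R) :
  (forall m, Cmod (g m) <= B) -> Cmod (csum g N) <= INR N * B.
Proof.
  intros H; induction N as [|N IH]; simpl csum.
  - rewrite Cmod_0. simpl; lra.
  - eapply Rle_trans; [apply Cmod_triangle|]. rewrite S_INR. specialize (H N). lra.
Qed.

Lemma is_series_csum (F : nat -> nat -> C) (v : nat -> C) (N : nat) :
  (forall m, is_series (F m) (v m)) ->
  is_series (fun j => csum (fun m => F m j) N) (csum v N).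
Proof.
  intros H. induction N as [|N IH].
  - apply (is_series_ext (fun _ => zero)); [reflexivity|].
    apply (filterlim_ext (fun _ => zero)); [|apply filterlim_const].
    intros j. induction j as [|j IHj]; [now rewrite sum_O|].
    now rewrite sum_Sn, <- IHj, plus_zero_r.
  - exact (is_series_plus (V := C_NormedModule) _ _ _ _ IH (H N)).
Qed.

Lemma csum_geom_root (q : C) (N : nat) :
  (q ^ N)%C = 1%C -> q <> 1%C -> csum (fun m => q ^ m)%C N = 0%C.
Proof.
  intros HqN Hq1.
  assert (Hgeom : ((q - 1) * csum (fun m => q ^ m)%C N = q ^ N - 1)%C).
  { clear HqN. induction N as [|N IH]; simpl csum; [simpl; ring|].
    rewrite Cmult_plus_distr_l, IH. simpl. ring. }
  assert (Hzero : ((q - 1) * csum (fun m => q ^ m)%C N)%C = 0%C)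
    by (rewrite Hgeom, HqN; ring).
  apply NNPP. intros Hs. exact (Cmult_neq_0 _ _ (Cminus_eq_contra _ _ Hq1) Hs Hzero).
Qed.

Lemma csum_pow_1 (N : nat) : csum (fun m => 1 ^ m)%C N = RtoC (INR N).
Proof.
  induction N as [|N IH]; simpl csum; [reflexivity|].
  rewrite IH, Cpow_1_l, S_INR, <- RtoC_plus. reflexivity.
Qed.

Definition root_unity (N : nat) : C := cis (2 * PI / INR N).

Lemma root_unity_pow_N (N : nat) : (0 < N)%nat -> (root_unity N ^ N)%C = 1%C.
Proof.
  intros HN. unfold root_unity. rewrite Cpow_cis.
  assert (0 < INR N) by (apply lt_0_INR; exact HN).
  replace (INR N * (2 * PI / INR N)) with (2 * PI) by (field; lra).
  unfold cis. now rewrite cos_2PI, sin_2PI.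
Qed.

(* On [(0, 4 PI)] the angle [e * 2 PI / N] has [sin = 0] only at [PI], [2 PI], [3 PI], and
   [cos = 1] only at [2 PI]. *)
Lemma root_unity_pow_neq1 (N e : nat) :
  (0 < e < 2 * N)%nat -> e <> N -> (root_unity N ^ e)%C <> 1%C.
Proof.
  intros [He0 He2N] HeN Heq. unfold root_unity in Heq. rewrite Cpow_cis in Heq.
  injection Heq as Hcos Hsin.
  assert (HN : 0 < INR N) by (apply lt_0_INR; lia).
  assert (HPI := PI_RGT_0).
  destruct (sin_eq_0_0 _ Hsin) as [z Hz].
  assert (Hz2 : IZR z * INR N = 2 * INR e).
  { apply Rmult_eq_reg_r with PI; [|lra].
    replace (2 * INR e * PI) with (INR e * (2 * PI / INR N) * INR N) by (field; lra).
    rewrite Hz. ring. }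
  assert (He : 0 < INR e) by (apply lt_0_INR; lia).
  assert (He' : INR e < 2 * INR N)
    by (change 2 with (INR 2); rewrite <- mult_INR; apply lt_INR; lia).
  assert (Hz0 : (0 < z)%Z) by (apply lt_IZR; nra).
  assert (Hz4 : (z < 4)%Z) by (apply lt_IZR; nra).
  assert (Hcases : z = 1%Z \/ z = 2%Z \/ z = 3%Z) by lia.
  destruct Hcases as [-> | [-> | ->]]; rewrite Hz in Hcos.
  - rewrite Rmult_1_l, cos_PI in Hcos. lra.
  - apply HeN, INR_eq. simpl in Hz2. lra.
  - replace (IZR 3 * PI) with (PI + 2 * INR 1 * PI) in Hcos by (simpl; ring).
    rewrite cos_period, cos_PI in Hcos. lra.
Qed.

Lemma Cmod_root_unity_csum_le (N e : nat) :
  Cmod (csum (fun m => (root_unity N ^ e) ^ m)%C N) <= INR N.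
Proof.
  rewrite <- (Rmult_1_r (INR N)). apply Cmod_csum_le. intros m.
  unfold root_unity. rewrite !Cpow_cis, Cmod_cis. lra.
Qed.

Lemma sum_n_single {G : AbelianMonoid} (t : nat -> G) (k n : nat) :
  (k <= n)%nat -> (forall j, (j <= n)%nat -> j <> k -> t j = zero) -> sum_n t n = t k.
Proof.
  intros Hkn Ht.
  assert (Hgen : forall n', (n' <= n)%nat ->
            sum_n t n' = if Nat.leb k n' then t k else zero).
  { induction n' as [|n' IH]; intros Hn'.
    - rewrite sum_O. destruct k; [reflexivity|]. apply Ht; lia.
    - rewrite sum_Sn, IH by lia.
      destruct (Nat.leb_spec k n'), (Nat.leb_spec k (S n')); try lia.
      + rewrite (Ht (S n')) by lia. apply plus_zero_r.
      + replace k with (S n') by lia. apply plus_zero_l.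
      + rewrite (Ht (S n')) by lia. apply plus_zero_r. }
  rewrite Hgen by lia. destruct (Nat.leb_spec k n); [reflexivity|lia].
Qed.

Lemma Cmod_polar (r t : R) : 0 <= r -> Cmod (RtoC r * cis t)%C = r.
Proof.
  intros Hr. rewrite Cmod_mult, Cmod_cis, Cmod_R, Rabs_pos_eq by exact Hr. ring.
Qed.

Lemma Cmod_entire_le (a : nat -> C) (f : C -> C) (z : C) :
  entire_with_coeffs a f ->
  Cmod (f z) <= Series (fun j => Cmod (a j) * Cmod z ^ j).
Proof.
  intros Hf.
  apply Cmod_series_le with (t := fun j => (a j * pow_n z j)%C)
    (b := fun j => Cmod (a j) * Cmod z ^ j); [apply Hf| |].
  - intros j. rewrite Cmod_mult, pow_n_Cpow, Cmod_pow. apply Rle_refl.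
  - apply Series_correct, (ex_series_Cmod_coeffs a f); [exact Hf|apply Cmod_ge_0].
Qed.

(* The supremum defining [max_modulus f r] is finite, so [real] does not hit its junk value. *)
Lemma Cmod_le_max_modulus (a : nat -> C) (f : C -> C) (r t : R) :
  entire_with_coeffs a f -> 0 <= r -> Cmod (f (RtoC r * cis t)%C) <= max_modulus f r.
Proof.
  intros Hf Hr. unfold max_modulus.
  set (E := fun y : R => exists t : R, y = Cmod (f ((r * cos t)%R, (r * sin t)%R))).
  assert (Hpolar : forall t, (RtoC r * cis t)%C = ((r * cos t)%R, (r * sin t)%R)).
  { intros t'. unfold RtoC, cis, Cmult; cbn [fst snd]. f_equal; ring. }
  destruct (Lub_Rbar_correct E) as [Hub Hlub].
  assert (Hbound : Rbar_le (Lub_Rbar E) (Series (fun j => Cmod (a j) * r ^ j))).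
  { apply Hlub. intros y [t' ->]. simpl. rewrite <- Hpolar.
    pose proof (Cmod_entire_le a f (RtoC r * cis t')%C Hf) as Hle.
    now rewrite Cmod_polar in Hle. }
  assert (Hmem : Rbar_le (Cmod (f (RtoC r * cis t)%C)) (Lub_Rbar E)).
  { apply Hub. exists t. now rewrite Hpolar. }
  destruct (Lub_Rbar E); simpl in *; tauto.
Qed.

(* Discrete Cauchy formula: averaging [w^((N-k)m) f(r w^m)] over the [N]-th roots of unity [w^m]
   kills every Taylor term of index [< N] except the [k]-th. *)
Lemma Cauchy_estimate_tail (a : nat -> C) (f : C -> C) (r : R) (k N : nat) :
  entire_with_coeffs a f -> 0 < r -> (k < N)%nat ->
  Cmod (a k) * r ^ k <=
    max_modulus f r + Series (fun i => Cmod (a (N + i)%nat) * r ^ (N + i)).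
Proof.
  intros Hf Hr HkN.
  set (w := root_unity N).
  set (G := fun e => csum (fun m => (w ^ e) ^ m)%C N).
  set (t := fun j => (a j * RtoC r ^ j * G (j + (N - k))%nat)%C).
  set (Sw := csum (fun m => (w ^ (N - k)) ^ m * f (RtoC r * w ^ m))%C N).
  set (T := Series (fun i => Cmod (a (N + i)%nat) * r ^ (N + i))).
  assert (HwN : (w ^ N)%C = 1%C) by (apply root_unity_pow_N; lia).
  assert (Ht : is_series t Sw).
  { apply (is_series_ext
      (fun j => csum (fun m => (w ^ (N - k)) ^ m * (a j * pow_n (RtoC r * w ^ m) j))%C N)).
    - intros j. unfold t, G. rewrite <- csum_scal. apply csum_ext. intros m.
      rewrite (pow_n_Cpow (RtoC r * w ^ m)%C j), Cpow_mult_l, (Cpow_comm_exp w m j).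
      rewrite Cpow_add_r, Cpow_mult_l. ring.
    - apply is_series_csum. intros m.
      exact (is_series_scal_l (V := C_NormedModule) _ _ _ (Hf _)). }
  assert (HS : Cmod Sw <= INR N * max_modulus f r).
  { apply Cmod_csum_le. intros m. rewrite Cmod_mult.
    unfold w, root_unity. rewrite !Cpow_cis, Cmod_cis, Rmult_1_l.
    apply (Cmod_le_max_modulus a); [exact Hf|lra]. }
  assert (Hzero : forall j, (j <= pred N)%nat -> j <> k -> t j = 0%C).
  { intros j Hj Hjk. unfold t, G. rewrite csum_geom_root; [ring| |].
    - rewrite Cpow_comm_exp, HwN. apply Cpow_1_l.
    - apply root_unity_pow_neq1; lia. }
  assert (Htk : t k = (a k * RtoC r ^ k * RtoC (INR N))%C).
  { unfold t, G. replace (k + (N - k))%nat with N by lia. now rewrite HwN, csum_pow_1. }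
  assert (Htail : is_series (fun i => t (N + i)%nat) (Sw - t k)%C).
  { apply is_series_incr_n; [lia|].
    match goal with |- is_series _ ?X => replace X with Sw; [exact Ht|] end.
    transitivity (plus (Sw - t k)%C (t k)).
    - change (Sw = plus (Sw - t k)%C (t k)). unfold plus; simpl. ring.
    - f_equal. symmetry. apply sum_n_single; [lia|exact Hzero]. }
  assert (Htail_le : Cmod (Sw - t k) <= INR N * T).
  { apply Cmod_series_le with (1 := Htail)
      (b := fun i => INR N * (Cmod (a (N + i)%nat) * r ^ (N + i))).
    - intros i. unfold t. rewrite !Cmod_mult, Cmod_pow, Cmod_R, Rabs_pos_eq by lra.
      assert (HG := Cmod_root_unity_csum_le N (N + i + (N - k))).
      assert (0 <= Cmod (a (N + i)%nat) * r ^ (N + i))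
        by (apply Rmult_le_pos; [apply Cmod_ge_0|apply pow_le; lra]).
      rewrite (Rmult_comm (INR N)). apply Rmult_le_compat_l; assumption.
    - apply (is_series_scal_l (V := R_NormedModule) (INR N)), Series_correct.
      apply (ex_series_incr_n (fun j => Cmod (a j) * r ^ j)), (ex_series_Cmod_coeffs a f);
        [exact Hf|lra]. }
  assert (HN : 0 < INR N) by (apply lt_0_INR; lia).
  assert (Hmain : Cmod (t k) <= Cmod Sw + Cmod (Sw - t k)).
  { replace (t k) with (Sw + - (Sw - t k))%C at 1 by ring.
    rewrite <- (Cmod_opp (Sw - t k)). apply Cmod_triangle. }
  assert (Htk_mod : Cmod (t k) = Cmod (a k) * r ^ k * INR N)
    by (rewrite Htk, !Cmod_mult, Cmod_pow, !Cmod_R, !Rabs_pos_eq by lra; reflexivity).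
  apply Rmult_le_reg_r with (INR N); [exact HN|]. lra.
Qed.

Lemma Cauchy_estimate (a : nat -> C) (f : C -> C) (r : R) (k : nat) :
  entire_with_coeffs a f -> 0 < r -> Cmod (a k) * r ^ k <= max_modulus f r.
Proof.
  intros Hf Hr. apply Rle_plus_epsilon. intros eps Heps.
  set (b := fun j => Cmod (a j) * r ^ j).
  assert (Hb : ex_series b) by (apply (ex_series_Cmod_coeffs a f); [exact Hf|lra]).
  assert (Hpartial : is_lim_seq (sum_n b) (Series b)) by exact (Series_correct _ Hb).
  apply is_lim_seq_spec in Hpartial.
  destruct (Hpartial (mkposreal eps Heps)) as [N0 HN0].
  set (N := S (max N0 k)).
  assert (Htail : Series (fun i => b (N + i)%nat) = Series b - sum_n b (max N0 k)).
  { rewrite (Series_incr_n b N), sum_n_Reals by (lia || exact Hb). simpl. ring. }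
  pose proof (Cauchy_estimate_tail a f r k N Hf Hr ltac:(lia)) as Hk.
  change (Cmod (a k) * r ^ k <= max_modulus f r + Series (fun i => b (N + i)%nat)) in Hk.
  rewrite Htail in Hk.
  specialize (HN0 (max N0 k) ltac:(lia)). apply Rabs_lt_between in HN0. simpl in HN0. lra.
Qed.

Lemma first_nonzero_coeff (a : nat -> C) :
  transcendental_coeffs a -> exists k, (forall j, (j < k)%nat -> a j = 0%C) /\ a k <> 0%C.
Proof.
  intros Ha. destruct (Ha O) as [n [_ Hn]].
  destruct (Wf_nat.dec_inh_nat_subset_has_unique_least_element (fun j => a j <> 0%C))
    as [k [[Hk Hleast] _]]; [intros j; apply classic | now exists n |].
  exists k. split; [|exact Hk].
  intros j Hj. apply NNPP. intros Hj0. specialize (Hleast j Hj0). lia.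
Qed.

Definition ratio_minimizer (M : R -> R) (n : nat) (x : R) : Prop :=
  0 < x /\ forall s, 0 < s -> s <> x -> M x / x ^ n < M s / s ^ n.

Lemma ratio_minimizer_log_gap (M : R -> R) (n : nat) (x h : R) :
  (forall s, 0 < s -> 0 < M s) -> ratio_minimizer M n x -> h <> 0 ->
  INR n * h < ln (M (x * exp h)) - ln (M x).
Proof.
  intros HM [Hx Hmin] Hh.
  set (s := x * exp h).
  assert (Hs : 0 < s) by (apply Rmult_lt_0_compat; [exact Hx|apply exp_pos]).
  assert (Hsx : s <> x).
  { intros Heq. apply Hh, exp_inv. rewrite exp_0.
    apply Rmult_eq_reg_l with x; [|lra]. unfold s in Heq. rewrite Heq. ring. }
  assert (Hlt := Hmin s Hs Hsx).
  assert (0 < x ^ n) by (apply pow_lt; exact Hx).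
  assert (0 < s ^ n) by (apply pow_lt; exact Hs).
  apply ln_increasing in Hlt; [|apply Rdiv_lt_0_compat; auto].
  rewrite !ln_div, !ln_pow in Hlt by auto.
  unfold s in Hlt. rewrite ln_mult, ln_exp in Hlt by (auto; apply exp_pos). unfold s. lra.
Qed.

Lemma ratio_minimizer_bounded (M : R -> R) (c : R) (k n : nat) (x B : R) :
  0 < c -> (k <= n)%nat -> (forall s, 0 < s -> c * s ^ k <= M s) ->
  ratio_minimizer M n x -> x <= B -> c * 2 ^ n * B ^ k < M (2 * B).
Proof.
  intros Hc Hkn HM [Hx Hmin] HxB.
  assert (Hratio := Hmin (2 * B) ltac:(lra) ltac:(lra)).
  set (d := (n - k)%nat).
  assert (Hn : n = (k + d)%nat) by (unfold d; lia).
  assert (HxB_d : x ^ d <= B ^ d) by (apply pow_incr; lra).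
  assert (0 < x ^ k) by (apply pow_lt; lra).
  assert (0 < x ^ d) by (apply pow_lt; lra).
  assert (0 < B ^ k) by (apply pow_lt; lra).
  assert (0 < B ^ d) by (apply pow_lt; lra).
  assert (0 < 2 ^ n) by (apply pow_lt; lra).
  assert (Hcross : M x * (2 ^ n * (B ^ k * B ^ d)) < M (2 * B) * (x ^ k * x ^ d)).
  { rewrite <- !pow_add, <- Hn, <- Rpow_mult_distr.
    apply Rmult_lt_reg_r with (/ (x ^ n * (2 * B) ^ n)).
    - apply Rinv_0_lt_compat, Rmult_lt_0_compat; apply pow_lt; lra.
    - replace (M x * (2 * B) ^ n * / (x ^ n * (2 * B) ^ n)) with (M x / x ^ n)
        by (field; split; apply pow_nonzero; lra).
      replace (M (2 * B) * x ^ n * / (x ^ n * (2 * B) ^ n)) with (M (2 * B) / (2 * B) ^ n)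
        by (field; split; apply pow_nonzero; lra).
      exact Hratio. }
  assert (HMx := HM x Hx).
  assert (HMx_pos : 0 < M x) by nra.
  assert (HM2B : 0 < M (2 * B)).
  { apply Rmult_lt_reg_r with (x ^ k * x ^ d); [apply Rmult_lt_0_compat; assumption|].
    rewrite Rmult_0_l. eapply Rlt_trans; [|exact Hcross].
    repeat apply Rmult_lt_0_compat; assumption. }
  apply Rmult_lt_reg_r with (x ^ k * B ^ d); [apply Rmult_lt_0_compat; assumption|].
  apply Rle_lt_trans with (M x * (2 ^ n * (B ^ k * B ^ d))).
  { replace (c * 2 ^ n * B ^ k * (x ^ k * B ^ d)) with (c * x ^ k * (2 ^ n * (B ^ k * B ^ d)))
      by ring.
    apply Rmult_le_compat_r; [|exact HMx]. left; repeat apply Rmult_lt_0_compat; assumption. }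
  eapply Rlt_le_trans; [exact Hcross|].
  apply Rmult_le_compat_l; [lra|]. apply Rmult_le_compat_l; lra.
Qed.

Lemma INR_le_pow2 (n : nat) : INR n <= 2 ^ n.
Proof.
  induction n as [|n IH]; [simpl; lra|]. rewrite S_INR. simpl pow.
  assert (1 <= 2 ^ n) by (apply pow_R1_Rle; lra). lra.
Qed.

Lemma ratio_minimizer_unbounded (M : R -> R) (c : R) (k : nat) (x : nat -> R) :
  0 < c -> (forall s, 0 < s -> c * s ^ k <= M s) ->
  (forall n, (k < n)%nat -> ratio_minimizer M n (x n)) ->
  is_lim_seq x p_infty.
Proof.
  intros Hc HM Hmin. apply is_lim_seq_spec. intros B.
  set (B' := Rmax 1 B).
  assert (HB' : 1 <= B') by apply Rmax_l.
  assert (0 < B' ^ k) by (apply pow_lt; lra).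
  destruct (INR_unbounded (M (2 * B') / (c * B' ^ k))) as [N HN].
  exists (S (max N k)). intros n Hn.
  apply Rle_lt_trans with B'; [apply Rmax_r|]. apply Rnot_le_lt. intros HxB.
  assert (Hbound := ratio_minimizer_bounded M c k n (x n) B' Hc ltac:(lia) HM
                      (Hmin n ltac:(lia)) HxB).
  assert (Hpow : 2 ^ n < M (2 * B') / (c * B' ^ k)).
  { apply Rmult_lt_reg_r with (c * B' ^ k); [nra|].
    replace (M (2 * B') / (c * B' ^ k) * (c * B' ^ k)) with (M (2 * B')) by (field; lra).
    lra. }
  pose proof (INR_le_pow2 n). assert (INR N <= INR n) by (apply le_INR; lia). lra.
Qed.

(* For small [y > 0], [(1 - exp (- y)) / y] and [(exp y - 1) / y] squeeze [q n] around 1. *)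
Lemma is_lim_seq_1_of_exp_bound (q : nat -> R) :
  (forall y eta, 0 < eta -> eventually (fun n => q n * y < exp y - 1 + eta)) ->
  is_lim_seq q 1.
Proof.
  intros Hq. apply is_lim_seq_spec. intros eps.
  assert (Heps := cond_pos eps).
  destruct (derivable_pt_lim_exp_0 (eps / 2) ltac:(lra)) as [d Hd].
  assert (Hd0 := cond_pos d).
  set (y := d / 2).
  assert (Hy : 0 < y) by (unfold y; lra).
  assert (Hslope : forall h, h <> 0 -> Rabs h < d ->
            exists g, exp h - 1 = g * h /\ Rabs (g - 1) < eps / 2).
  { intros h Hh0 Hhd. exists ((exp h - 1) / h). split; [field; exact Hh0|].
    specialize (Hd h Hh0 Hhd). now rewrite Rplus_0_l, exp_0 in Hd. }
  destruct (Hslope y) as [g1 [Hg1 Hg1']]; [lra|rewrite Rabs_pos_eq; unfold y; lra|].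
  destruct (Hslope (- y)) as [g2 [Hg2 Hg2']]; [lra|rewrite Rabs_Ropp, Rabs_pos_eq; unfold y; lra|].
  apply Rabs_lt_between' in Hg1', Hg2'.
  destruct (Hq y (y * eps / 2)) as [N1 H1]; [nra|].
  destruct (Hq (- y) (y * eps / 2)) as [N2 H2]; [nra|].
  exists (max N1 N2). intros n Hn.
  specialize (H1 n ltac:(lia)). specialize (H2 n ltac:(lia)).
  apply Rabs_lt_between'. split; nra.
Qed.

Lemma Rpower_mult_exp (x h rho : R) :
  0 < x -> Rpower (x * exp h) rho = Rpower x rho * exp (rho * h).
Proof.
  intros Hx. unfold Rpower. rewrite ln_mult, ln_exp, <- exp_plus by (auto; apply exp_pos).
  f_equal. ring.
Qed.

Section RatioMinimizerAsymptotics.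

Variables (M : R -> R) (rho tau : R) (k : nat) (x : nat -> R).
Hypotheses (Hrho : 0 < rho) (Htau : 0 < tau) (HM : forall s, 0 < s -> 0 < M s)
  (Hgrowth : is_lim (fun r => ln (M r) / Rpower r rho) p_infty tau)
  (Hmin : forall n, (k < n)%nat -> ratio_minimizer M n (x n))
  (Hx : is_lim_seq x p_infty).

Let u (r : R) : R := ln (M r) / Rpower r rho.

Lemma is_lim_seq_growth (z : nat -> R) :
  is_lim_seq z p_infty -> is_lim_seq (fun n => u (z n)) tau.
Proof. apply (is_lim_comp_seq u _ p_infty tau Hgrowth). now exists O. Qed.

Lemma ratio_minimizer_exp_bound (y eta : R) : 0 < eta ->
  eventually (fun n => INR n / (tau * rho) / Rpower (x n) rho * y < exp y - 1 + eta).
Proof.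
  intros Heta. destruct (Req_dec y 0) as [->|Hy].
  { exists O. intros n _. rewrite Rmult_0_r, exp_0. lra. }
  set (h := y / rho).
  assert (Hxh : is_lim_seq (fun n => x n * exp h) p_infty).
  { eapply is_lim_seq_mult; [exact Hx|apply is_lim_seq_const|].
    apply is_Rbar_mult_p_infty_pos, exp_pos. }
  assert (Hw : is_lim_seq (fun n => u (x n * exp h) * exp y - u (x n)) (tau * exp y - tau)).
  { apply is_lim_seq_minus'; [apply is_lim_seq_mult'; [|apply is_lim_seq_const]|];
      apply is_lim_seq_growth; assumption. }
  apply is_lim_seq_spec in Hw.
  destruct (Hw (mkposreal (tau * eta) ltac:(nra))) as [N HN]; simpl in HN.
  exists (max N (S k)). intros n Hn.
  specialize (HN n ltac:(lia)). apply Rabs_lt_between' in HN.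
  assert (Hxn := proj1 (Hmin n ltac:(lia))).
  assert (Hh : h <> 0).
  { unfold h, Rdiv. apply Rmult_integral_contrapositive_currified; [exact Hy|].
    apply Rinv_neq_0_compat; lra. }
  assert (Hgap := ratio_minimizer_log_gap M n (x n) h HM (Hmin n ltac:(lia)) Hh).
  set (P := Rpower (x n) rho) in *.
  assert (HP : 0 < P) by apply exp_pos.
  assert (Hln : forall r, ln (M r) = u r * Rpower r rho)
    by (intros r; unfold u; field; apply Rgt_not_eq, exp_pos).
  rewrite !Hln, Rpower_mult_exp in Hgap by exact Hxn. fold P in Hgap.
  replace (rho * h) with y in Hgap by (unfold h; field; lra).
  replace (INR n / (tau * rho) / P * y) with (INR n * h / P / tau) by (unfold h; field; lra).
  apply Rmult_lt_reg_r with (P * tau); [nra|].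
  replace (INR n * h / P / tau * (P * tau)) with (INR n * h) by (field; lra).
  nra.
Qed.

End RatioMinimizerAsymptotics.

Lemma is_lim_seq_Rpower_ratio (u v : nat -> R) (rho : R) : 0 < rho ->
  eventually (fun n => 0 < u n /\ 0 < v n) ->
  is_lim_seq (fun n => u n / Rpower (v n) rho) 1 ->
  is_lim_seq (fun n => v n / Rpower (u n) (1 / rho)) 1.
Proof.
  intros Hrho [N Hpos] Hlim.
  set (g := fun q => / Rpower q (1 / rho)).
  assert (Hg : continuity_pt g 1).
  { apply continuity_pt_filterlim, (ex_derive_continuous (K := R_AbsRing) (V := R_NormedModule)).
    unfold g, Rpower. auto_derive. repeat split; [lra|apply Rgt_not_eq, exp_pos]. }
  assert (Hg1 : g 1 = 1) by (unfold g, Rpower; now rewrite ln_1, Rmult_0_r, exp_0, Rinv_1).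
  pose proof (is_lim_seq_continuous g _ 1 Hg Hlim) as Hglim. rewrite Hg1 in Hglim.
  eapply is_lim_seq_ext_loc; [|exact Hglim].
  exists N. intros n Hn. destruct (Hpos n Hn) as [Hu Hv].
  set (P := Rpower (v n) rho).
  assert (HP : 0 < P) by apply exp_pos.
  assert (HProot : Rpower P (1 / rho) = v n)
    by (unfold P; rewrite Rpower_mult, Rmult_div_assoc, Rmult_1_r, Rdiv_diag, Rpower_1 by lra;
        reflexivity).
  assert (Hsplit : Rpower (u n) (1 / rho) = Rpower (u n / P) (1 / rho) * v n).
  { rewrite <- HProot, Rpower_mult_distr by (try apply Rdiv_lt_0_compat; assumption).
    f_equal. field. lra. }
  unfold g. rewrite Hsplit. field. split; [lra|apply Rgt_not_eq, exp_pos].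
Qed.

Theorem theorem8p2 (a : nat -> C) (f : C -> C) (rho tau : R) (rd : nat -> R) :
  entire_with_coeffs a f ->
  transcendental_coeffs a ->
  perfectly_regular_growth f rho tau ->
  (forall k : nat, (forall j : nat, (j < k)%nat -> a j = 0%C) -> a k <> 0%C ->
     forall n : nat, (k < n)%nat -> is_quasi_optimal_radius f n (rd n)) ->
  is_lim_seq (fun n : nat => rd n / Rpower (INR n / (tau * rho)) (1 / rho)) 1.
Proof.
  intros Hf Htr [Hrho [_ [Htau Hgrowth]]] Hq.
  destruct (first_nonzero_coeff a Htr) as [k [Hk0 Hk]].
  set (M := max_modulus f) in *.
  assert (Hc : 0 < Cmod (a k)) by (apply Cmod_gt_0; exact Hk).
  assert (Hlow : forall s, 0 < s -> Cmod (a k) * s ^ k <= M s)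
    by (intros s Hs; exact (Cauchy_estimate a f s k Hf Hs)).
  assert (HMpos : forall s, 0 < s -> 0 < M s).
  { intros s Hs. eapply Rlt_le_trans; [|exact (Hlow s Hs)].
    apply Rmult_lt_0_compat; [exact Hc|apply pow_lt; exact Hs]. }
  assert (Hmin : forall n, (k < n)%nat -> ratio_minimizer M n (rd n)) by exact (Hq k Hk0 Hk).
  assert (Hrd := ratio_minimizer_unbounded M (Cmod (a k)) k rd Hc Hlow Hmin).
  apply is_lim_seq_Rpower_ratio; [exact Hrho| |].
  - exists (S k). intros n Hn. split; [|exact (proj1 (Hmin n ltac:(lia)))].
    apply Rdiv_lt_0_compat; [apply lt_0_INR; lia|nra].
  - apply is_lim_seq_1_of_exp_bound. intros y eta Heta.
    exact (ratio_minimizer_exp_bound M rho tau k rd Hrho Htau HMpos Hgrowth Hmin Hrd y eta Heta).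
Qed.
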